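(* Let $p$ be a prime and let $A^*(\mathbf{Q}_p)$ be the group, under composition, of maps $f(x)=ax+b$ on $\mathbf{Q}_p$ with $a\in\mathbf{Q}_p\setminus\{0\}$, $b\in\mathbf{Q}_p$, topologized as a subset of $\mathbf{Q}_p\times\mathbf{Q}_p$ via $(a,b)$; let $A^*(\mathbf{Z}_p)$ be the subgroup with $|a|_p=1$, $b\in\mathbf{Z}_p$. For $f\in A^*(\mathbf{Q}_p)$ define $L(f)=\max(|a-1|_p,|b|_p)$. Fix $t\ge1$ and put $L'(f)=L(f)$ if $f\in A^*(\mathbf{Z}_p)$ and $L'(f)=t$ otherwise. Then $L'(f^{-1})=L'(f)$ and $L'(f\circ g)\le\max(L'(f),L'(g))$ for all $f,g\in A^*(\mathbf{Q}_p)$, and $L'(g^{-1}\circ f)$ is a left-invariant ultrametric on $A^*(\mathbf{Q}_p)$ determining its usual topology; for $f,g\in A^*(\mathbf{Z}_p)$ it equals $\max(|a-c|_p,|b-d|_p)$ where $g(x)=cx+d$.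
   Context: $|\cdot|_p$ is the $p$-adic absolute value and $\mathbf{Z}_p$ the $p$-adic integers. *)

From HB Require Import structures.
From mathcomp Require Import all_boot all_order all_algebra.
From mathcomp Require Import boolp reals.
Set Implicit Arguments. Unset Strict Implicit. Unset Printing Implicit Defensive.
Import Order.TTheory GRing.Theory Num.Theory.
Local Open Scope ring_scope.

Section Padic.
Variables (p : nat) (R : realType).

Definition vp_rat (q : rat) : int :=
  (logn p `|numq q|%N)%:Z - (logn p `|denq q|%N)%:Z.

Definition padic_abs (q : rat) : R :=
  if q == 0 then 0 else (p%:R : R) ^ (- vp_rat q).
End Padic.

(* (K, absK) is the field Q_p with its p-adic absolute value:
   the completion of (Q, |.|_p), i.e. a complete valued field whose
   absolute value extends |.|_p on Q and in which Q is dense.  *)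
Definition is_Qp (p : nat) (R : realType) (K : fieldType) (absK : K -> R) : Prop :=
  [/\ ((forall x, 0 <= absK x) /\ (forall x, absK x = 0 <-> x = 0) /\
       (forall x y, absK (x * y) = absK x * absK y)),
      (forall x y, absK (x + y) <= Num.max (absK x) (absK y)),
      (forall q : rat, absK (ratr q) = padic_abs p R q),
      (forall x (e : R), 0 < e -> exists q : rat, absK (x - ratr q) < e)
    & (forall u : nat -> K,
         (forall e : R, 0 < e -> exists N, forall m n, (N <= m)%N -> (N <= n)%N ->
              absK (u m - u n) < e) ->
         exists l, forall e : R, 0 < e -> exists N, forall n, (N <= n)%N ->
              absK (u n - l) < e)].

Section Affine.
Variables (R : realType) (K : fieldType) (absK : K -> R).

(* f = (a, b) represents x |-> a x + b *)
Definition inAQ (f : K * K) : Prop := f.1 != 0.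
Definition inAZ (f : K * K) : Prop := absK f.1 = 1 /\ absK f.2 <= 1.

(* (f o g)(x) = a (c x + d) + b *)
Definition acomp (f g : K * K) : K * K := (f.1 * g.1, f.1 * g.2 + f.2).
Definition ainv (f : K * K) : K * K := (f.1^-1, - (f.2 / f.1)).

Definition Lfun (f : K * K) : R := Num.max (absK (f.1 - 1)) (absK f.2).

Definition L' (t : R) (f : K * K) : R :=
  if `[< inAZ f >] then Lfun f else t.
End Affine.

Definition adist (R : realType) (K : fieldType) (absK : K -> R) (t : R)
  (f g : K * K) : R := L' absK t (acomp (ainv g) f).

From HB Require Import structures.
From mathcomp Require Import all_boot all_order all_algebra.
From mathcomp Require Import boolp reals.
From mathcomp Require Import ring lra.
Import Order.TTheory GRing.Theory Num.Theory.
Local Open Scope ring_scope.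

(* Only the ultrametric absolute-value axioms of Q_p are needed.  On the
   subgroup A*(Z_p) the length L is ultrametric because a |-> ax + b with
   |a| = 1 and |b| <= 1 composes and inverts without increasing |a - 1| or
   |b|; outside A*(Z_p) the constant t >= 1 dominates every value of L.  For
   e <= 1 the ball of radius e about f is then {g | |g.i - f.i| < e |f.1|},
   which yields both the topology and the formula on A*(Z_p). *)

Section AffineGroup.
Context {K : fieldType}.
Implicit Types f g h : K * K.

Lemma acomp_ainvl f : inAQ f -> acomp (ainv f) f = (1, 0).
Proof. by case: f => a b; rewrite /inAQ /acomp /ainv /= => na; congr pair; field. Qed.

Lemma acomp_ainvK f g : inAQ g -> acomp g (acomp (ainv g) f) = f.
Proof.
by case: f g => a b [c d]; rewrite /inAQ /acomp /ainv /= => nc; congr pair; field.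
Qed.

Lemma acomp_ainv_eq1 f g : inAQ g -> acomp (ainv g) f = (1, 0) <-> f = g.
Proof.
move=> ng; split=> [h1|->]; last exact: acomp_ainvl.
by rewrite -(acomp_ainvK f g ng) h1 /acomp /= mulr1 mulr0 add0r; case: (g).
Qed.

Lemma ainv_acomp_ainv f g : inAQ f -> inAQ g ->
  ainv (acomp (ainv g) f) = acomp (ainv f) g.
Proof.
case: f g => a b [c d]; rewrite /inAQ /acomp /ainv /= => na nc.
by congr pair; field; rewrite na nc.
Qed.

Lemma acomp_ainv_trans f g h : inAQ g -> inAQ h ->
  acomp (ainv h) f = acomp (acomp (ainv h) g) (acomp (ainv g) f).
Proof.
case: f g h => a b [c d] [u v]; rewrite /inAQ /acomp /ainv /= => nc nu.
by congr pair; field; rewrite nc nu.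
Qed.

Lemma acomp_ainv_acompl f g h : inAQ g -> inAQ h ->
  acomp (ainv (acomp h g)) (acomp h f) = acomp (ainv g) f.
Proof.
case: f g h => a b [c d] [u v]; rewrite /inAQ /acomp /ainv /= => nc nu.
by congr pair; field; rewrite nc nu.
Qed.

End AffineGroup.

Section UltrametricAbs.
Context {R : realType} {K : fieldType} (absK : K -> R).
Hypotheses (absK_ge0 : forall x, 0 <= absK x)
  (absK_eq0 : forall x, absK x = 0 <-> x = 0)
  (absKM : forall x y, absK (x * y) = absK x * absK y)
  (absKD_max : forall x y, absK (x + y) <= Num.max (absK x) (absK y)).

Lemma absK0 : absK 0 = 0. Proof. exact/absK_eq0. Qed.

Lemma absK_gt0 x : x != 0 -> 0 < absK x.
Proof. by move=> /eqP nx; rewrite lt_def absK_ge0 andbT; apply/eqP => /absK_eq0. Qed.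

Lemma absK1 : absK 1 = 1.
Proof.
have n1 : absK 1 != 0 by rewrite gt_eqF // absK_gt0 ?oner_eq0.
by apply: (mulfI n1); rewrite -absKM !mulr1.
Qed.

Lemma absKN x : absK (- x) = absK x.
Proof.
have absKN1 : absK (-1) = 1.
  have := absKM (-1) (-1); rewrite mulrNN mulr1 absK1 => e.
  have := absK_ge0 (-1); nra.
by rewrite -mulN1r absKM absKN1 mul1r.
Qed.

Lemma absKBC x y : absK (x - y) = absK (y - x).
Proof. by rewrite -absKN opprB. Qed.

Lemma absKV x : absK x^-1 = (absK x)^-1.
Proof.
have [->|nx] := eqVneq x 0; first by rewrite invr0 absK0 invr0.
have nax : absK x != 0 by rewrite gt_eqF // absK_gt0.
by apply: (mulfI nax); rewrite -absKM !mulfV // absK1.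
Qed.

Lemma absK_div x y : absK (x / y) = absK x / absK y.
Proof. by rewrite absKM absKV. Qed.

Lemma absKD_le x y c : absK x <= c -> absK y <= c -> absK (x + y) <= c.
Proof. by move=> hx hy; apply: le_trans (absKD_max x y) _; rewrite ge_max hx hy. Qed.

Lemma absKB_le x y c : absK x <= c -> absK y <= c -> absK (x - y) <= c.
Proof. by move=> hx hy; apply: absKD_le; rewrite ?absKN. Qed.

Lemma absKD_ltl x y : absK x < absK y -> absK (x + y) = absK y.
Proof.
move=> lt_xy; apply/eqP; rewrite eq_le absKD_le ?(ltW lt_xy) //=.
have := absKD_max (y + x) (- x); rewrite addrK absKN [y + x]addrC le_max.
by case/orP=> // le_yx; have := lt_le_trans lt_xy le_yx; rewrite ltxx.
Qed.

Lemma inAZ_unit : inAZ absK (1, 0).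
Proof. by split; rewrite /= ?absK1 // absK0 ler01. Qed.

Lemma inAZ_inAQ f : inAZ absK f -> inAQ f.
Proof.
by case=> f1 _; apply/eqP=> f0; move: f1; rewrite f0 absK0 => /eqP; rewrite eq_sym oner_eq0.
Qed.

Lemma inAZ_ainv f : inAZ absK (ainv f) <-> inAZ absK f.
Proof.
rewrite /inAZ /ainv /=; rewrite absKV absKN absK_div.
split=> -[f1 f2].
  have f1' : absK f.1 = 1 by rewrite -[absK f.1]invrK f1 invr1.
  by move: f2; rewrite f1' invr1 mulr1.
by rewrite f1 invr1 mulr1.
Qed.

Lemma inAZ_acomp f g : inAZ absK f -> inAZ absK g -> inAZ absK (acomp f g).
Proof.
move=> [f1 f2] [g1 g2]; rewrite /inAZ /= absKM f1 g1 mul1r; split=> //.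
by apply: absKD_le; rewrite ?absKM ?f1 ?mul1r.
Qed.

Lemma Lfun_ge0 f : 0 <= Lfun absK f.
Proof. by rewrite le_max absK_ge0. Qed.

Lemma Lfun_le1 f : inAZ absK f -> Lfun absK f <= 1.
Proof. by case=> f1 f2; rewrite ge_max f2 andbT absKB_le ?f1 ?absK1. Qed.

Lemma Lfun_lt1_inAZ f : Lfun absK f < 1 -> inAZ absK f.
Proof.
rewrite gt_max => /andP[f1 f2]; split; last exact: ltW.
by rewrite -(subrK 1 f.1) absKD_ltl absK1.
Qed.

Lemma Lfun_eq0 f : Lfun absK f = 0 <-> f = (1, 0).
Proof.
split=> [|->]; last by rewrite /Lfun /= subrr absK0 maxxx.
have absK_le0 x : absK x <= 0 -> x = 0.
  by move=> x0; apply/absK_eq0/eqP; rewrite eq_le x0 absK_ge0.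
move=> /eqP; rewrite eq_le ge_max => /andP[/andP[/absK_le0 f1 /absK_le0 f2] _].
by case: f f1 f2 => a b /= /eqP; rewrite subr_eq0 => /eqP -> ->.
Qed.

Lemma Lfun_ainv f : inAZ absK f -> Lfun absK (ainv f) = Lfun absK f.
Proof.
move=> fZ; have nf := inAZ_inAQ _ fZ; case: fZ => f1 _.
rewrite /Lfun /ainv /= absKN absK_div f1 divr1.
have -> : f.1^-1 - 1 = f.1^-1 * (1 - f.1) by field.
by rewrite absKM absKV f1 invr1 mul1r absKBC.
Qed.

Lemma Lfun_acomp f g : inAZ absK f -> inAZ absK g ->
  Lfun absK (acomp f g) <= Num.max (Lfun absK f) (Lfun absK g).
Proof.
move=> [f1 _] _; rewrite /Lfun /acomp /= ge_max; apply/andP; split.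
  have -> : f.1 * g.1 - 1 = f.1 * (g.1 - 1) + (f.1 - 1) by ring.
  by apply: absKD_le; rewrite ?absKM ?f1 ?mul1r !le_max lexx ?orbT.
by apply: absKD_le; rewrite ?absKM ?f1 ?mul1r !le_max lexx ?orbT.
Qed.

Lemma Lfun_acomp_ainv f g : inAQ g -> Lfun absK (acomp (ainv g) f) =
  Num.max (absK (f.1 - g.1)) (absK (f.2 - g.2)) / absK g.1.
Proof.
rewrite /inAQ => ng; rewrite /Lfun /acomp /ainv /= maxr_pMl ?invr_ge0 //.
have -> : g.1^-1 * f.1 - 1 = (f.1 - g.1) / g.1 by field.
have -> : g.1^-1 * f.2 + - (g.2 / g.1) = (f.2 - g.2) / g.1 by field.
by rewrite !absK_div.
Qed.

Variable t : R.
Hypothesis t_ge1 : 1 <= t.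

Lemma L'_inAZ f : inAZ absK f -> L' absK t f = Lfun absK f.
Proof. by rewrite /L'; case: asboolP. Qed.

Lemma L'_notAZ f : ~ inAZ absK f -> L' absK t f = t.
Proof. by rewrite /L'; case: asboolP. Qed.

Lemma L'_ge0 f : 0 <= L' absK t f.
Proof.
by rewrite /L'; case: asboolP => _; [exact: Lfun_ge0 | exact: le_trans ler01 t_ge1].
Qed.

Lemma L'_le_t f : L' absK t f <= t.
Proof. by rewrite /L'; case: asboolP => // /Lfun_le1/le_trans; apply. Qed.

Lemma L'_eq0 f : L' absK t f = 0 <-> f = (1, 0).
Proof.
have [fZ|fZ] := pselect (inAZ absK f); first by rewrite L'_inAZ // Lfun_eq0.
rewrite L'_notAZ //; split=> [t0|f1]; first by move: t_ge1; rewrite t0 ler10.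
by move: fZ; rewrite f1 => /(_ inAZ_unit).
Qed.

Lemma L'_lt f e : e <= 1 -> (L' absK t f < e) = (Lfun absK f < e).
Proof.
move=> e1; have [fZ|fZ] := pselect (inAZ absK f); first by rewrite L'_inAZ.
rewrite L'_notAZ // ltNge (le_trans e1 t_ge1) /=; apply/esym/negbTE.
by apply/negP=> /lt_le_trans/(_ e1)/Lfun_lt1_inAZ.
Qed.

Lemma L'_ainv f : L' absK t (ainv f) = L' absK t f.
Proof.
have [fZ|fZ] := pselect (inAZ absK f).
  by rewrite !L'_inAZ ?Lfun_ainv //; apply/inAZ_ainv.
by rewrite !L'_notAZ // => /inAZ_ainv.
Qed.

Lemma L'_acomp f g : L' absK t (acomp f g) <= Num.max (L' absK t f) (L' absK t g).
Proof.
have [fZ|fZ] := pselect (inAZ absK f).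
  have [gZ|gZ] := pselect (inAZ absK g).
    by rewrite !L'_inAZ ?Lfun_acomp //; apply: inAZ_acomp.
  by rewrite (L'_notAZ _ gZ) le_max L'_le_t orbT.
by rewrite (L'_notAZ _ fZ) le_max L'_le_t.
Qed.

Lemma adistC f g : inAQ f -> inAQ g -> adist absK t f g = adist absK t g f.
Proof.
move=> nf ng; by rewrite /adist -ainv_acomp_ainv // L'_ainv.
Qed.

Lemma adist_eq0 f g : inAQ g -> adist absK t f g = 0 <-> f = g.
Proof. by move=> ng; rewrite /adist L'_eq0 acomp_ainv_eq1. Qed.

Lemma adist_max f g h : inAQ g -> inAQ h ->
  adist absK t f h <= Num.max (adist absK t f g) (adist absK t g h).
Proof. by move=> ng nh; rewrite maxC /adist (acomp_ainv_trans f g h ng nh) L'_acomp. Qed.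

Lemma adist_acompl f g h : inAQ g -> inAQ h ->
  adist absK t (acomp h f) (acomp h g) = adist absK t f g.
Proof. by move=> ng nh; rewrite /adist acomp_ainv_acompl. Qed.

Lemma adist_lt f g e : inAQ f -> inAQ g -> e <= 1 ->
  (adist absK t f g < e) =
  (Num.max (absK (g.1 - f.1)) (absK (g.2 - f.2)) < e * absK f.1).
Proof.
move=> nf ng e1; rewrite adistC // /adist L'_lt // Lfun_acomp_ainv //.
by rewrite ltr_pdivrMr // absK_gt0.
Qed.

Lemma adist_inAZ f g : inAZ absK f -> inAZ absK g ->
  adist absK t f g = Num.max (absK (f.1 - g.1)) (absK (f.2 - g.2)).
Proof.
move=> fZ gZ; have ng := inAZ_inAQ _ gZ.
have hZ : inAZ absK (acomp (ainv g) f) by apply: inAZ_acomp => //; apply/inAZ_ainv.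
by rewrite /adist L'_inAZ // Lfun_acomp_ainv // gZ.1 divr1.
Qed.

Lemma adist_ball_coord f e : inAQ f -> 0 < e -> exists2 e0 : R, 0 < e0 &
  forall g, inAQ g -> adist absK t f g < e0 ->
  absK (g.1 - f.1) < e /\ absK (g.2 - f.2) < e.
Proof.
move=> nf e0; have af0 : 0 < absK f.1 by apply: absK_gt0.
exists (Num.min 1 (e / absK f.1)); first by rewrite lt_min ltr01 divr_gt0.
move=> g ng; rewrite adist_lt ?ge_min ?lexx // gt_max => /andP[g1 g2].
have le_e : Num.min 1 (e / absK f.1) * absK f.1 <= e.
  by rewrite -ler_pdivlMr // ge_min lexx orbT.
by split; apply: lt_le_trans le_e.
Qed.

Lemma coord_ball_adist f e : inAQ f -> 0 < e -> exists2 e0 : R, 0 < e0 &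
  forall g, inAQ g -> absK (g.1 - f.1) < e0 -> absK (g.2 - f.2) < e0 ->
  adist absK t f g < e.
Proof.
move=> nf e0; have af0 : 0 < absK f.1 by apply: absK_gt0.
set m := Num.min 1 e; have m0 : 0 < m by rewrite lt_min ltr01.
exists (m * absK f.1); first exact: mulr_gt0.
move=> g ng g1 g2; apply: (@lt_le_trans _ _ m); last by rewrite ge_min lexx orbT.
by rewrite adist_lt ?ge_min ?lexx // gt_max g1 g2.
Qed.

Lemma adist_open_iff (U : K * K -> Prop) : (forall f, U f -> inAQ f) ->
  (forall f, U f -> exists2 e : R, 0 < e &
     forall g, inAQ g -> absK (g.1 - f.1) < e -> absK (g.2 - f.2) < e -> U g) <->
  (forall f, U f -> exists2 e : R, 0 < e &
     forall g, inAQ g -> adist absK t f g < e -> U g).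
Proof.
move=> UA; split=> openU f Uf; have [e e0 ballU] := openU f Uf.
- have [e' e'0 close] := adist_ball_coord f e (UA f Uf) e0.
  by exists e' => // g ng /(close g ng)[]; apply: ballU.
- have [e' e'0 close] := coord_ball_adist f e (UA f Uf) e0.
  by exists e' => // g ng g1 g2; apply: ballU; last exact: close.
Qed.

End UltrametricAbs.

Theorem mainTheorem13 (p : nat) (R : realType) (K : fieldType) (absK : K -> R)
  (t : R) :
  prime p -> is_Qp p absK -> 1 <= t ->
  [/\ (* L'(f^{-1}) = L'(f) *)
      (forall f, inAQ f -> L' absK t (ainv f) = L' absK t f),
      (* L'(f o g) <= max(L'(f), L'(g)) *)
      (forall f g, inAQ f -> inAQ g ->
         L' absK t (acomp f g) <= Num.max (L' absK t f) (L' absK t g)),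
      (* d(f,g) = L'(g^{-1} o f) is a left-invariant ultrametric *)
      [/\ (forall f g, inAQ f -> inAQ g -> 0 <= adist absK t f g),
          (forall f g, inAQ f -> inAQ g -> adist absK t f g = 0 <-> f = g),
          (forall f g, inAQ f -> inAQ g -> adist absK t f g = adist absK t g f),
          (forall f g h, inAQ f -> inAQ g -> inAQ h ->
             adist absK t f h <= Num.max (adist absK t f g) (adist absK t g h))
        & (forall f g h, inAQ f -> inAQ g -> inAQ h ->
             adist absK t (acomp h f) (acomp h g) = adist absK t f g)],
      (* d determines the usual (subspace of Q_p x Q_p) topology *)
      (forall U : K * K -> Prop, (forall f, U f -> inAQ f) ->
         ((forall f, U f -> exists2 e : R, 0 < e &
             forall g, inAQ g -> absK (g.1 - f.1) < e -> absK (g.2 - f.2) < e -> U g)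
          <->
          (forall f, U f -> exists2 e : R, 0 < e &
             forall g, inAQ g -> adist absK t f g < e -> U g)))
    & (* on A*(Z_p): d(f,g) = max(|a-c|_p, |b-d|_p) *)
      (forall f g, inAZ absK f -> inAZ absK g ->
         adist absK t f g = Num.max (absK (f.1 - g.1)) (absK (f.2 - g.2)))].
Proof.
move=> _ [[absK_ge0 [absK_eq0 absKM]] absKD_max _ _ _] t_ge1.
split=> [f _|f g _ _|||]; [exact: L'_ainv | exact: L'_acomp | split | |].
- by move=> f g _ _; apply: L'_ge0.
- by move=> f g _; apply: adist_eq0.
- exact: adistC.
- by move=> f g h _ ng nh; apply: adist_max.
- by move=> f g h _ ng nh; apply: adist_acompl.
- exact: adist_open_iff.
- exact: adist_inAZ.
Qed.
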